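(* For $1\le i\le n$ and $1\le j\le n-1$ we have $g_jt_i=t_{s_j(i)}g_j$. Consequently $g_jf=(s_j.f)g_j$ for every $f\in R[t_1,\ldots,t_n]$ and $1\le j\le n-1$.
   Context: Standing setup: $R$ is an integral domain, $n\ge 2$, $r\ge 1$, and $q,u_1,\ldots,u_r\in R$ with $q$ invertible in $R$ and $\Delta:=\prod_{1\le j<i\le r}(u_i-u_j)$ invertible in $R$. For $1\le c\le r$ let $F_c(X)\in R[X]$ be the unique polynomial of degree $\le r-1$ with $F_c(u_{c'})=\delta_{c,c'}\Delta$ for all $1\le c'\le r$. The modified Ariki–Koike (Shoji) algebra $\mathcal H_{n,r}=\mathcal H_{n,r}(R,q,u_1,\ldots,u_r)$ is the associative $R$-algebra generated by $t_1,\ldots,t_n,T_1,\ldots,T_{n-1}$ subject to: $(T_i-q)(T_i+q^{-1})=0$; $(t_i-u_1)\cdots(t_i-u_r)=0$; $T_iT_{i+1}T_i=T_{i+1}T_iT_{i+1}$; $T_iT_j=T_jT_i$ for $|i-j|\ge2$; $t_it_j=t_jt_i$; $T_jt_k=t_kT_j$ for $k\ne j,j+1$; and for $2\le j\le n$: $T_{j-1}t_j=t_{j-1}T_{j-1}+\Delta^{-2}\sum_{1\le c_1<c_2\le r}(u_{c_2}-u_{c_1})(q-q^{-1})F_{c_1}(t_{j-1})F_{c_2}(t_j)$ and $T_{j-1}t_{j-1}=t_jT_{j-1}-\Delta^{-2}\sum_{1\le c_1<c_2\le r}(u_{c_2}-u_{c_1})(q-q^{-1})F_{c_1}(t_{j-1})F_{c_2}(t_j)$.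 Write $[1,r]=\{1,\ldots,r\}$; for $\mathbf k=(k_1,\ldots,k_n)\in[1,r]^n$ set $b_{\mathbf k}:=\prod_{i=1}^n\prod_{1\le j\le r,\,j\ne k_i}\frac{t_i-u_j}{u_{k_i}-u_j}$. For $1\le i,j\le n$ let $B'_{i,j}:=-(q-q^{-1})\sum_{\mathbf k\in[1,r]^n,\ k_i<k_j}b_{\mathbf k}$, and for $1\le i\le n-1$ let $g_i:=T_i+B'_{i,i+1}$. $\mathfrak S(n)$ acts on $R[t_1,\ldots,t_n]$ by $R$-algebra automorphisms via $w.t_i=t_{w(i)}$; $s_j=(j\ j+1)$. *)

From HB Require Import structures.
From mathcomp Require Import all_boot all_order all_algebra all_fingroup.
From mathcomp Require Import mpoly.
Set Implicit Arguments. Unset Strict Implicit. Unset Printing Implicit Defensive.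
Import Order.TTheory GRing.Theory Num.Theory.
Local Open Scope ring_scope.

(* Conventions: indices are 0-based. The generators t_1..t_n of the paper are
   t 0 .. t (n-1), the generators T_1..T_{n-1} are T 0 .. T (n-2);
   the parameters u_1..u_r are u : 'I_r -> R. *)

Definition Delta (R : idomainType) (r : nat) (u : 'I_r -> R) : R :=
  \prod_(i < r) \prod_(j < r | (j < i)%N) (u i - u j).

Definition swapn (j i : nat) : nat :=
  if i == j then j.+1 else if i == j.+1 then j else i.

(* the defining relations of the modified Ariki-Koike algebra H_{n,r},
   for elements t, T of an R-algebra A *)
Definition AK_relations (R : idomainType) (A : algType R) (n r : nat)
  (q : R) (u : 'I_r -> R) (F : 'I_r -> {poly R}) (t T : nat -> A) : Prop :=
  let D := Delta u in
  let corr j := \sum_(c1 < r) \sum_(c2 < r | (c1 < c2)%N)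
      ((D ^- 2 * (u c2 - u c1) * (q - q^-1)) *:
         (horner_alg (t j) (F c1) * horner_alg (t j.+1) (F c2))) in
  (forall i, (i < n.-1)%N -> (T i - q%:A) * (T i + (q^-1)%:A) = 0) /\
      (forall i, (i < n)%N -> \prod_(c < r) (t i - (u c)%:A) = 0) /\
      (forall i, (i.+1 < n.-1)%N -> T i * T i.+1 * T i = T i.+1 * T i * T i.+1) /\
      (forall i j, (i < n.-1)%N -> (j < n.-1)%N -> (i.+1 < j)%N || (j.+1 < i)%N ->
         T i * T j = T j * T i) /\
      (forall i j, (i < n)%N -> (j < n)%N -> t i * t j = t j * t i) /\
      (forall j k, (j < n.-1)%N -> (k < n)%N -> k != j -> k != j.+1 ->
         T j * t k = t k * T j) /\
      (forall j, (j < n.-1)%N -> T j * t j.+1 = t j * T j + corr j) /\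
      (forall j, (j < n.-1)%N -> T j * t j = t j.+1 * T j - corr j).

Definition bk (R : idomainType) (A : algType R) (n r : nat)
  (u : 'I_r -> R) (t : nat -> A) (k : n.-tuple 'I_r) : A :=
  \prod_(i < n) \prod_(c < r | c != tnth k i)
     ((u (tnth k i) - u c)^-1 *: (t i - (u c)%:A)).

Definition kval (n r : nat) (k : n.-tuple 'I_r) (i : nat) : nat :=
  nth 0%N [seq val x | x <- k] i.

Definition Bprime (R : idomainType) (A : algType R) (n r : nat)
  (q : R) (u : 'I_r -> R) (t : nat -> A) (i j : nat) : A :=
  (- (q - q^-1)) *: \sum_(k : n.-tuple 'I_r | (kval k i < kval k j)%N) bk u t k.

Definition gen_g (R : idomainType) (A : algType R) (n r : nat)
  (q : R) (u : 'I_r -> R) (t T : nat -> A) (j : nat) : A :=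
  T j + Bprime n q u t j j.+1.

Definition evalA (R : idomainType) (A : algType R) (n : nat)
  (x : nat -> A) (f : {mpoly R[n]}) : A :=
  mpoly.mmap (in_alg A) (fun i : 'I_n => x (val i)) f.

From HB Require Import structures.
From mathcomp Require Import all_boot all_order all_algebra all_fingroup.
From mathcomp Require Import mpoly.
From mathcomp Require Import ring.
Import Order.TTheory GRing.Theory Num.Theory.
Local Open Scope ring_scope.
Set Implicit Arguments. Unset Strict Implicit. Unset Printing Implicit Defensive.

(* Let L_c be the Lagrange basis at the nodes u and e_i(c) := L_c(t_i).  Since
   \prod_c (t_i - u_c) = 0, t_i e_i(c) = u_c e_i(c), and \sum_c e_i(c) = 1; moreover
   F_c = Delta L_c and b_k = \prod_i e_i(k_i).  Summing b_k over all k with prescribed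
   (k_j, k_{j+1}) gives e_j(k_j) e_{j+1}(k_{j+1}), which identifies the correction term
   of the relations for T_j t_j and T_j t_{j+1} with B'_{j,j+1} (t_j - t_{j+1}).  As
   B'_{j,j+1} commutes with every t_i, adding it to T_j absorbs that correction. *)

Section NoncommutativeProducts.
Variable S : pzRingType.

Lemma bigD1_commr (I : eqType) (l : seq I) (P : pred I) (G : I -> S) i0 :
  uniq l -> i0 \in l -> P i0 -> (forall i, GRing.comm (G i0) (G i)) ->
  \prod_(i <- l | P i) G i = G i0 * \prod_(i <- l | P i && (i != i0)) G i.
Proof.
move=> + + Pi0 cG; elim: l => [//|a l IHl] /= /andP [al ul].
rewrite in_cons !big_cons; have [ea|ne] := eqVneq i0 a => /= [_|il].
  subst a; rewrite Pi0 andbF; congr (_ * _); rewrite big_seq_cond [RHS]big_seq_cond.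
  by apply: eq_bigl => i; case: (boolP (i \in l)) => //= il; rewrite (memPn al i il) andbT.
by rewrite IHl // andbT; case: (P a); rewrite // !mulrA cG.
Qed.

Lemma intertwineX (g x y : S) k : g * x = y * g -> g * x ^+ k = y ^+ k * g.
Proof.
move=> gxy; elim: k => [|k IHk]; first by rewrite !expr0 mulr1 mul1r.
by rewrite !exprS mulrA gxy -mulrA IHk mulrA.
Qed.

Lemma sum_prod_ffun_fix2 (I J : finType) (G : I -> J -> S) (i1 i2 : I) (a b : J) :
  i1 != i2 -> (forall i i' c c', GRing.comm (G i c) (G i' c')) ->
  (forall i, \sum_c G i c = 1) ->
  \sum_(f : {ffun I -> J} | (f i1 == a) && (f i2 == b)) \prod_i G i (f i)
    = G i1 a * G i2 b.
Proof.
move=> i12 cG sumG.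
pose Q i c := if i == i1 then c == a else if i == i2 then c == b else true.
pose H i := if i == i1 then G i1 a else if i == i2 then G i2 b else 1.
have -> : \sum_(f : {ffun I -> J} | (f i1 == a) && (f i2 == b)) \prod_i G i (f i)
    = \sum_(f in family Q) \prod_i G i (f i).
  apply: eq_bigl => f; apply/andP/familyP => [[/eqP f1 /eqP f2] i|fQ].
    by rewrite unfold_in /Q; case: eqP => [->|_]; [|case: eqP => [->|]]; rewrite ?f1 ?f2.
  by have := fQ i1; have := fQ i2; rewrite !unfold_in /Q eqxx eq_sym (negbTE i12) eqxx.
rewrite -(bigA_distr_big_dep Q) (eq_bigr H) => [|i _]; last first.
  rewrite /Q /H; case: eqP => [->|_]; first exact: big_pred1_eq.
  by case: eqP => [->|_]; [exact: big_pred1_eq | exact: sumG].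
have cH i i' : GRing.comm (H i) (H i').
  rewrite /H; case: (i == i1); case: (i == i2); case: (i' == i1); case: (i' == i2);
    by [exact: commr1 | exact/commr_sym/commr1 | exact: cG].
rewrite (bigD1_commr (P := predT) (i0 := i1)) ?index_enum_uniq ?mem_index_enum //.
rewrite (bigD1_commr (i0 := i2)) ?index_enum_uniq ?mem_index_enum //=; last by rewrite eq_sym.
rewrite big1 => [|i /andP [/negbTE i1i /negbTE i2i]]; last by rewrite /H i1i i2i.
by rewrite /H eqxx eq_sym (negbTE i12) eqxx mulr1.
Qed.

End NoncommutativeProducts.

Lemma comm_horner_alg (R : nzSemiRingType) (A : semiAlgType R) (x y : A) (p : {poly R}) :
  GRing.comm y x -> GRing.comm y (horner_alg x p).
Proof.
move=> cyx; apply: commr_horner cyx _ => i.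
by rewrite coef_map; apply: comm_alg.
Qed.

Section Lagrange.
Variables (R : idomainType) (r : nat) (u : 'I_r -> R).
Hypothesis Delta_unit : Delta u \is a GRing.unit.

Lemma Delta_unit_subr (c c' : 'I_r) : c != c' -> u c - u c' \is a GRing.unit.
Proof.
have unit_lt (a b : 'I_r) : (b < a)%N -> u a - u b \is a GRing.unit.
  move=> ba; move/unitr_prodP/(_ a (mem_index_enum _) isT): Delta_unit.
  by move/unitr_prodP/(_ b (mem_index_enum _) ba).
rewrite neq_ltn => /orP [] lt_cc'; last exact: unit_lt.
by rewrite -opprB unitrN unit_lt.
Qed.

Lemma Delta_unit_inj : injective u.
Proof.
move=> c c' ucc'; have [//|/Delta_unit_subr] := eqVneq c c'.
by rewrite ucc' subrr unitr0.
Qed.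

Definition lagrange (c : 'I_r) : {poly R} :=
  \prod_(c' < r | c' != c) ((u c - u c')^-1 *: ('X - (u c')%:P)).

Lemma horner_lagrange c c' : (lagrange c).[u c'] = (c == c')%:R.
Proof.
rewrite horner_prod; have [<-|ne] := eqVneq c c'.
  by rewrite big1 // => d dc; rewrite hornerZ hornerXsubC mulVr // Delta_unit_subr 1?eq_sym.
by rewrite (bigD1 c') 1?eq_sym //= hornerZ hornerXsubC subrr mulr0 mul0r.
Qed.

Lemma size_lagrange c : (size (lagrange c) <= r)%N.
Proof.
rewrite /lagrange scaler_prod; apply: leq_trans (size_scale_leq _ _) _.
rewrite -big_filter size_prod_XsubC size_filter.
have := cardC1 c; rewrite card_ord cardE /enum_mem size_filter /= => ->.
by rewrite ltn_predL (leq_ltn_trans _ (ltn_ord c)).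
Qed.

Lemma eq_poly_nodes (p p' : {poly R}) : (size p <= r)%N -> (size p' <= r)%N ->
  (forall c, p.[u c] = p'.[u c]) -> p = p'.
Proof.
move=> sp sp' pp'; apply/eqP; rewrite -subr_eq0; apply/negPn/negP => nz.
have := max_poly_roots nz (rs := map u (enum 'I_r)).
rewrite size_map size_enum_ord map_inj_uniq ?enum_uniq; last exact: Delta_unit_inj.
have -> : all (root (p - p')) (map u (enum 'I_r)).
  by apply/allP => _ /mapP [c _ ->]; rewrite rootE hornerD hornerN pp' subrr.
move=> /(_ isT isT); rewrite ltnNge => /negP; apply.
by apply: leq_trans (size_polyD _ _) _; rewrite size_polyN geq_max sp sp'.
Qed.

Lemma lagrange_interp (F : 'I_r -> {poly R}) :
  (forall c, (size (F c) <= r)%N) ->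
  (forall c c', (F c).[u c'] = (c == c')%:R * Delta u) ->
  forall c, F c = Delta u *: lagrange c.
Proof.
move=> sF F_nodes c; apply: eq_poly_nodes => // [|c'].
  exact: leq_trans (size_scale_leq _ _) (size_lagrange c).
by rewrite hornerZ horner_lagrange F_nodes mulrC.
Qed.

Lemma sum_lagrange : (0 < r)%N -> \sum_c lagrange c = 1.
Proof.
move=> r_gt0; apply: eq_poly_nodes => [|| c'].
- by apply: (big_ind (fun p : {poly R} => size p <= r)%N) => [|p p' sp sp'|c _];
    rewrite ?size_poly0 ?(leq_trans (size_polyD _ _)) ?geq_max ?sp ?sp' ?size_lagrange.
- by rewrite size_poly1.
rewrite horner_sum hornerC (bigD1 c') //= horner_lagrange eqxx big1 ?addr0 // => c cc'.
by rewrite horner_lagrange (negbTE cc').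
Qed.

Lemma horner_alg_lagrange_root (A : algType R) (x : A) c :
  \prod_(c' < r) (x - (u c')%:A) = 0 ->
  horner_alg x (lagrange c) * x = u c *: horner_alg x (lagrange c).
Proof.
move=> x_root; apply/eqP; rewrite -subr_eq0 -mulr_algl comm_alg -mulrBr.
rewrite -{2}(horner_algX x) -(horner_algC x) -rmorphB -rmorphM /=.
have -> : lagrange c * ('X - (u c)%:P) =
    (\prod_(c' < r | c' != c) (u c - u c')^-1) *: \prod_(c' < r) ('X - (u c')%:P).
  by rewrite /lagrange scaler_prod [X in _ = _ *: X](bigD1 c) //= -scalerAl mulrC.
rewrite linearZ rmorph_prod /= (eq_bigr (fun c' => x - (u c')%:A)) => [|c' _].
  by rewrite x_root mulr0.
by rewrite rmorphB /= horner_algX horner_algC.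
Qed.

End Lagrange.

Lemma kvalE (n r : nat) (k : n.-tuple 'I_r) (i : 'I_n) : kval k i = tnth k i.
Proof. by rewrite /kval (nth_map (tnth k i)) ?size_tuple // -tnth_nth. Qed.

Section LagrangeIdempotents.
Variables (R : idomainType) (A : algType R) (n r : nat) (u : 'I_r -> R) (t : nat -> A).
Hypothesis Delta_unit : Delta u \is a GRing.unit.
Hypothesis t_comm : forall i j, (i < n)%N -> (j < n)%N -> t i * t j = t j * t i.
Hypothesis t_root : forall i, (i < n)%N -> \prod_(c < r) (t i - (u c)%:A) = 0.

Definition idem (i : nat) (c : 'I_r) : A := horner_alg (t i) (lagrange u c).

Lemma bk_idem (k : n.-tuple 'I_r) : bk u t k = \prod_(i < n) idem i (tnth k i).
Proof.
apply: eq_bigr => i _; rewrite /idem rmorph_prod; apply: eq_bigr => c _.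
by rewrite [RHS]linearZ rmorphB /= horner_algX horner_algC mulr_algl.
Qed.

Lemma comm_t_idem i j c : (i < n)%N -> (j < n)%N -> GRing.comm (t i) (idem j c).
Proof. by move=> lt_in lt_jn; apply/comm_horner_alg/t_comm. Qed.

Lemma comm_idem i j c c' : (i < n)%N -> (j < n)%N -> GRing.comm (idem i c) (idem j c').
Proof. by move=> lt_in lt_jn; apply/comm_horner_alg/commr_sym/comm_t_idem. Qed.

Lemma idem_mul_t i c : (i < n)%N -> idem i c * t i = u c *: idem i c.
Proof. by move=> lt_in; apply/horner_alg_lagrange_root/t_root. Qed.

Lemma sum_idem i : (0 < r)%N -> \sum_c idem i c = 1.
Proof. by move=> r_gt0; rewrite -rmorph_sum sum_lagrange // rmorph1. Qed.

Lemma horner_alg_nodes_basis (F : 'I_r -> {poly R}) i c :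
  (forall c, (size (F c) <= r)%N) ->
  (forall c c', (F c).[u c'] = (c == c')%:R * Delta u) ->
  horner_alg (t i) (F c) = Delta u *: idem i c.
Proof.
by move=> sF F_nodes; rewrite (lagrange_interp Delta_unit sF F_nodes) linearZ /= mulr_algl.
Qed.

Lemma bk_mul_t (k : n.-tuple 'I_r) (i0 : 'I_n) :
  bk u t k * t i0 = u (tnth k i0) *: bk u t k.
Proof.
rewrite bk_idem (bigD1_commr (P := predT) (i0 := i0)) ?index_enum_uniq ?mem_index_enum //;
  last by move=> i; apply: comm_idem.
have ct : GRing.comm (t i0) (\prod_(i <- index_enum 'I_n | true && (i != i0)) idem i (tnth k i)).
  by apply: commr_prod => i _; apply: comm_t_idem.
by rewrite -mulrA -ct mulrA idem_mul_t // -scalerAl.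
Qed.

Lemma comm_t_Bprime q i j j' : (i < n)%N -> GRing.comm (t i) (Bprime n q u t j j').
Proof.
move=> lt_in; rewrite /GRing.comm /Bprime -scalerAr -scalerAl; congr (_ *: _).
apply: commr_sum => k _.
by rewrite bk_idem; apply: commr_prod => i' _; apply: comm_t_idem.
Qed.

Lemma sum_bk_fix2 (j j' : 'I_n) a b : (0 < r)%N -> j != j' ->
  \sum_(k : n.-tuple 'I_r | (tnth k j == a) && (tnth k j' == b)) bk u t k
    = idem j a * idem j' b.
Proof.
move=> r_gt0 jj'; rewrite -(sum_prod_ffun_fix2 (G := fun i : 'I_n => idem i)) //; last first.
- by move=> i; apply: sum_idem.
- by move=> i i' c c'; apply: comm_idem.
rewrite (reindex (fun f : {ffun 'I_n -> 'I_r} => [tuple f i | i < n])) /=; last first.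
  exists (fun k => [ffun i => tnth k i]) => [f _|k _].
    by apply/ffunP => i; rewrite ffunE tnth_mktuple.
  by apply: eq_from_tnth => i; rewrite tnth_mktuple ffunE.
apply: eq_big => [f|f _]; first by rewrite !tnth_mktuple.
by rewrite bk_idem; apply: eq_bigr => i _; rewrite tnth_mktuple.
Qed.

Lemma Bprime_mul_subr q (j j' : 'I_n) : (0 < r)%N -> j != j' ->
  Bprime n q u t j j' * (t j - t j') =
  \sum_(p : 'I_r * 'I_r | (p.1 < p.2)%N)
     ((u p.2 - u p.1) * (q - q^-1)) *: (idem j p.1 * idem j' p.2).
Proof.
move=> r_gt0 jj'; rewrite /Bprime -scalerAl mulr_suml.
under eq_bigr => k _ do rewrite mulrBr !bk_mul_t -scalerBl.
rewrite (eq_bigl (fun k : n.-tuple 'I_r => (tnth k j < tnth k j')%N)) => [|k]; last first.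
  by rewrite !kvalE.
rewrite (partition_big (fun k : n.-tuple 'I_r => (tnth k j, tnth k j'))
   [pred p : 'I_r * 'I_r | (p.1 < p.2)%N]) //= scaler_sumr.
apply: eq_bigr => [[a b] /= ab]; rewrite -sum_bk_fix2 // !scaler_sumr.
rewrite (eq_bigl (fun k => (tnth k j == a) && (tnth k j' == b))) => [|k]; last first.
  by rewrite xpair_eqE; case: eqP => [->|]; case: eqP => [->|]; rewrite ?andbF ?andbT.
by apply: eq_bigr => k /andP [/eqP -> /eqP ->]; rewrite scalerA; congr (_ *: _); ring.
Qed.

Lemma AK_correctionE q (F : 'I_r -> {poly R}) j : (0 < r)%N -> (j.+1 < n)%N ->
  (forall c, (size (F c) <= r)%N) ->
  (forall c c', (F c).[u c'] = (c == c')%:R * Delta u) ->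
  \sum_(c1 < r) \sum_(c2 < r | (c1 < c2)%N)
      ((Delta u ^- 2 * (u c2 - u c1) * (q - q^-1)) *:
         (horner_alg (t j) (F c1) * horner_alg (t j.+1) (F c2)))
  = Bprime n q u t j j.+1 * (t j - t j.+1).
Proof.
move=> r_gt0 lt_j1n sF F_nodes.
rewrite (Bprime_mul_subr q (j := Ordinal (ltnW lt_j1n)) (j' := Ordinal lt_j1n)) //=; last first.
  by rewrite -(inj_eq val_inj) /= ltn_eqF.
rewrite pair_big_dep /=; apply: eq_bigr => p _.
rewrite !(horner_alg_nodes_basis _ _ sF F_nodes) -scalerAl -scalerAr !scalerA.
have DD : Delta u ^- 2 * (Delta u * Delta u) = 1 by rewrite -expr2 mulVr // unitrX.
by congr (_ *: _); rewrite -[RHS]mul1r -DD; ring.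
Qed.

End LagrangeIdempotents.

Lemma mmap_intertwine (R : idomainType) (A : algType R) (n : nat) (g : A)
    (h h' : 'I_n -> A) (f : {mpoly R[n]}) :
  (forall i, g * h i = h' i * g) ->
  g * mpoly.mmap (in_alg A) h f = mpoly.mmap (in_alg A) h' f * g.
Proof.
move=> ghh'; rewrite /mpoly.mmap mulr_sumr mulr_suml; apply: eq_bigr => m _.
rewrite mulrA -comm_alg -!mulrA; congr (_ * _).
apply: (big_rec2 (fun y y' => g * y = y' * g)) => [|i y y' _ gyy'].
  by rewrite mul1r mulr1.
by rewrite mulrA (intertwineX _ (ghh' i)) -mulrA gyy' mulrA.
Qed.

Theorem proposition3p3 (R : idomainType) (A : algType R) (n r : nat)
  (q : R) (u : 'I_r -> R) (F : 'I_r -> {poly R}) (t T : nat -> A) :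
  (2 <= n)%N -> (1 <= r)%N ->
  q \is a GRing.unit -> Delta u \is a GRing.unit ->
  (forall c, (size (F c) <= r)%N) ->
  (forall c c', (F c).[u c'] = (c == c')%:R * Delta u) ->
  AK_relations n q u F t T ->
  (forall i j, (i < n)%N -> (j < n.-1)%N ->
     gen_g n q u t T j * t i = t (swapn j i) * gen_g n q u t T j) /\
  (forall (f : {mpoly R[n]}) j, (j < n.-1)%N ->
     gen_g n q u t T j * evalA t f = evalA (fun i => t (swapn j i)) f * gen_g n q u t T j).
Proof.
move=> _ r_gt0 _ Delta_unit sF F_nodes.
case=> _ [t_root [_ [_ [t_comm [T_t [T_tS T_t0]]]]]].
have g_t i j : (i < n)%N -> (j < n.-1)%N ->
    gen_g n q u t T j * t i = t (swapn j i) * gen_g n q u t T j.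
  move=> lt_in lt_jn; have lt_j1n : (j.+1 < n)%N by rewrite -ltn_predRL.
  have corrE := AK_correctionE Delta_unit t_comm t_root q r_gt0 lt_j1n sF F_nodes.
  have cB k : (k < n)%N -> GRing.comm (t k) (Bprime n q u t j j.+1).
    exact: comm_t_Bprime.
  rewrite /gen_g /swapn mulrDl mulrDr; case: eqP => [->|/eqP ij].
    by rewrite T_t0 // corrE mulrBr opprB -addrA subrK -cB.
  case: eqP => [->|/eqP ij1]; last by rewrite T_t // cB.
  by rewrite T_tS // corrE mulrBr -addrA subrK cB // ltnW.
split=> // f j lt_jn; apply: mmap_intertwine => i.
exact: g_t (ltn_ord i) lt_jn.
Qed.
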